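(* If $2\mu\bar c\le\sigma^2 r$, define $g(x)=\frac{\bar c}{r}(1-e^{-\gamma x})$ for $x\ge0$. If $2\mu\bar c>\sigma^2 r$, then there is a unique $y_0>0$ such that $k_1e^{-\lambda_1y_0}-k_2e^{\lambda_2y_0}+\frac{b\bar c}{r}=0$, and define $$g(x)=\begin{cases}k_1e^{\lambda_1(x-y_0)}-k_2e^{-\lambda_2(x-y_0)}+\frac{b\bar c}{r}, & 0\le x\le y_0,\\[1mm] -\frac1\gamma e^{-\gamma(x-y_0)}+\frac{\bar c}{r}, & x>y_0.\end{cases}$$ In both cases $g\in C^2([0,\infty))$ satisfies $-\mathcal Lg-\bar c\,\mathcal Tg=0$ on $[0,\infty)$ and $g(0)=0$; moreover $0\le g\le \bar c/r$, $0\le g'\le g'(0)<\infty$, and $g'$ is strictly decreasing on $[0,\infty)$ (so $g$ is strictly concave). In the second case $g'(y_0)=1$.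
   Context: Constants: $\mu\in\mathbb R$, $\sigma>0$, $r>0$, $\bar c\in(0,\mu]$, $b\in[0,1]$. Operators: $\mathcal L v=\tfrac12\sigma^2v''+\mu v'-rv$, $\mathcal T v=b(1-v')+(1-b)(1-v')^+$. Parameters: $\gamma=\frac{\sqrt{(\mu-\bar c)^2+2\sigma^2 r}+(\mu-\bar c)}{\sigma^2}$, $\lambda_{1}=\frac{\sqrt{(\mu-b\bar c)^2+2\sigma^2 r}-(\mu-b\bar c)}{\sigma^2}$, $\lambda_{2}=\frac{\sqrt{(\mu-b\bar c)^2+2\sigma^2 r}+(\mu-b\bar c)}{\sigma^2}$, $k_1=\frac{1}{\lambda_1+\lambda_2}\big[1+\lambda_2\big(\frac{(1-b)\bar c}{r}-\frac1\gamma\big)\big]$, $k_2=\frac{1}{\lambda_1+\lambda_2}\big[1-\lambda_1\big(\frac{(1-b)\bar c}{r}-\frac1\gamma\big)\big]$. *)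

From Stdlib Require Import Reals.
From Coquelicot Require Import Coquelicot.
Open Scope R_scope.

Definition gam (mu sigma r cbar : R) : R :=
  (sqrt ((mu - cbar)^2 + 2 * sigma^2 * r) + (mu - cbar)) / sigma^2.
Definition lam1 (mu sigma r cbar b : R) : R :=
  (sqrt ((mu - b * cbar)^2 + 2 * sigma^2 * r) - (mu - b * cbar)) / sigma^2.
Definition lam2 (mu sigma r cbar b : R) : R :=
  (sqrt ((mu - b * cbar)^2 + 2 * sigma^2 * r) + (mu - b * cbar)) / sigma^2.
Definition kk1 (mu sigma r cbar b : R) : R :=
  / (lam1 mu sigma r cbar b + lam2 mu sigma r cbar b) *
  (1 + lam2 mu sigma r cbar b * ((1 - b) * cbar / r - / gam mu sigma r cbar)).
Definition kk2 (mu sigma r cbar b : R) : R :=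
  / (lam1 mu sigma r cbar b + lam2 mu sigma r cbar b) *
  (1 - lam1 mu sigma r cbar b * ((1 - b) * cbar / r - / gam mu sigma r cbar)).

Definition opL (mu sigma r : R) (v : R -> R) (x : R) : R :=
  / 2 * sigma^2 * Derive (Derive v) x + mu * Derive v x - r * v x.
Definition opT (b : R) (v : R -> R) (x : R) : R :=
  b * (1 - Derive v x) + (1 - b) * Rmax 0 (1 - Derive v x).

Definition g_case1 (mu sigma r cbar : R) (x : R) : R :=
  cbar / r * (1 - exp (- gam mu sigma r cbar * x)).

(* g in the case 2 mu cbar > sigma^2 r, given y0; the first branch is used
   for all x <= y0 (this also gives the natural extension to x < 0). *)
Definition g_case2 (mu sigma r cbar b y0 : R) (x : R) : R :=
  if Rle_dec x y0 then
    kk1 mu sigma r cbar b * exp (lam1 mu sigma r cbar b * (x - y0))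
    - kk2 mu sigma r cbar b * exp (- lam2 mu sigma r cbar b * (x - y0))
    + b * cbar / r
  else - / gam mu sigma r cbar * exp (- gam mu sigma r cbar * (x - y0)) + cbar / r.

Definition y0_eq (mu sigma r cbar b y0 : R) : Prop :=
  kk1 mu sigma r cbar b * exp (- lam1 mu sigma r cbar b * y0)
  - kk2 mu sigma r cbar b * exp (lam2 mu sigma r cbar b * y0) + b * cbar / r = 0.

(* g is C^2 on [0, oo) (two-sided derivatives of the function as defined on R) *)
Definition C2_nonneg (g : R -> R) : Prop :=
  forall x, 0 <= x ->
    ex_derive g x /\ ex_derive (Derive g) x /\ continuous (Derive (Derive g)) x.

Definition good_g (mu sigma r cbar b : R) (g : R -> R) : Prop :=
  C2_nonneg g /\
  (forall x, 0 <= x -> - opL mu sigma r g x - cbar * opT b g x = 0) /\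
  g 0 = 0 /\
  (forall x, 0 <= x -> 0 <= g x <= cbar / r) /\
  (forall x, 0 <= x -> 0 <= Derive g x <= Derive g 0) /\
  (forall x y, 0 <= x -> x < y -> Derive g y < Derive g x).

From Stdlib Require Import Reals Lra Psatz FunctionalExtensionality.
From Coquelicot Require Import Coquelicot.
Open Scope R_scope.

(* On each side of the free boundary y0 the HJB equation is a linear ODE with
   constant coefficients, so g is a sum of exponentials whose rates are the
   positive roots gamma, lambda1, lambda2 of the characteristic quadratics.
   The two regimes are separated by g'(0) = cbar gamma / r <= 1, which is
   equivalent to 2 mu cbar <= sigma^2 r.  In the second regime k1, k2 are
   chosen so that the inner and outer solutions have equal value and slope 1
   at y0; the second derivatives then match as well, so g is C^2.  The point y0
   is the unique positive zero of h(y) = k1 e^{-lambda1 y} - k2 e^{lambda2 y}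
   + b cbar / r, which is positive at 0, eventually negative, and whose
   derivative stays negative once it is.  Concavity comes from g'' < 0, which
   the same sign-propagation argument carries from y0 to the left. *)

Definition piecewise (a : R) (f1 f2 : R -> R) (x : R) : R :=
  if Rle_dec x a then f1 x else f2 x.

Lemma piecewise_le a f1 f2 x : x <= a -> piecewise a f1 f2 x = f1 x.
Proof. intros H. unfold piecewise. destruct (Rle_dec x a); [reflexivity | contradiction]. Qed.

Lemma piecewise_gt a f1 f2 x : a < x -> piecewise a f1 f2 x = f2 x.
Proof. intros H. unfold piecewise. destruct (Rle_dec x a); [lra | reflexivity]. Qed.

Lemma piecewise_cases a f1 f2 x :
  piecewise a f1 f2 x = f1 x \/ piecewise a f1 f2 x = f2 x.
Proof. unfold piecewise. destruct (Rle_dec x a); auto. Qed.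

Lemma piecewise_locally_lt a f1 f2 x :
  x < a -> locally x (fun y => f1 y = piecewise a f1 f2 y).
Proof.
  intros H. apply filter_imp with (fun y => y < a); [|exact (open_lt a x H)].
  intros y Hy. symmetry. apply piecewise_le. lra.
Qed.

Lemma piecewise_locally_gt a f1 f2 x :
  a < x -> locally x (fun y => f2 y = piecewise a f1 f2 y).
Proof.
  intros H. apply filter_imp with (fun y => a < y); [|exact (open_gt a x H)].
  intros y Hy. symmetry. apply piecewise_gt. lra.
Qed.

Lemma continuous_either (F f1 f2 : R -> R) x :
  (forall y, F y = f1 y \/ F y = f2 y) -> f1 x = F x -> f2 x = F x ->
  continuous f1 x -> continuous f2 x -> continuous F x.
Proof.
  intros HF E1 E2 C1 C2. unfold continuous, filterlim, filter_le, filtermap in *.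
  rewrite E1 in C1. rewrite E2 in C2.
  intros P HP. apply filter_imp with (fun y => P (f1 y) /\ P (f2 y)).
  - intros y [P1 P2]. destruct (HF y) as [-> | ->]; assumption.
  - apply filter_and; [apply C1 | apply C2]; exact HP.
Qed.

Lemma derivable_pt_lim_either (F f1 f2 : R -> R) x l :
  (forall y, F y = f1 y \/ F y = f2 y) -> f1 x = F x -> f2 x = F x ->
  derivable_pt_lim f1 x l -> derivable_pt_lim f2 x l -> derivable_pt_lim F x l.
Proof.
  intros HF E1 E2 D1 D2 eps Heps.
  destruct (D1 eps Heps) as [d1 H1]. destruct (D2 eps Heps) as [d2 H2].
  exists (mkposreal _ (Rmin_pos _ _ (cond_pos d1) (cond_pos d2))).
  intros h Hh0 Hh. simpl in Hh. pose proof (Rmin_l d1 d2). pose proof (Rmin_r d1 d2).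
  destruct (HF (x + h)) as [-> | ->].
  - rewrite <- E1. apply H1; [exact Hh0 | lra].
  - rewrite <- E2. apply H2; [exact Hh0 | lra].
Qed.

Lemma is_derive_piecewise a (f1 f2 d1 d2 : R -> R) :
  (forall x, is_derive f1 x (d1 x)) -> (forall x, is_derive f2 x (d2 x)) ->
  f1 a = f2 a -> d1 a = d2 a ->
  forall x, is_derive (piecewise a f1 f2) x (piecewise a d1 d2 x).
Proof.
  intros D1 D2 Ef Ed x. destruct (Rtotal_order x a) as [Hx | [-> | Hx]].
  - rewrite piecewise_le by lra.
    exact (is_derive_ext_loc _ _ _ _ (piecewise_locally_lt a f1 f2 x Hx) (D1 x)).
  - rewrite piecewise_le by lra. apply is_derive_Reals.
    apply derivable_pt_lim_either with f1 f2.
    + apply piecewise_cases.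
    + now rewrite piecewise_le by lra.
    + now rewrite piecewise_le, Ef by lra.
    + now apply is_derive_Reals.
    + rewrite Ed. now apply is_derive_Reals.
  - rewrite piecewise_gt by lra.
    exact (is_derive_ext_loc _ _ _ _ (piecewise_locally_gt a f1 f2 x Hx) (D2 x)).
Qed.

Lemma continuous_piecewise a (f1 f2 : R -> R) :
  (forall x, continuous f1 x) -> (forall x, continuous f2 x) -> f1 a = f2 a ->
  forall x, continuous (piecewise a f1 f2) x.
Proof.
  intros C1 C2 Ef x. destruct (Rtotal_order x a) as [Hx | [-> | Hx]].
  - exact (continuous_ext_loc _ _ _ (piecewise_locally_lt a f1 f2 x Hx) (C1 x)).
  - apply continuous_either with f1 f2; auto.
    + apply piecewise_cases.
    + now rewrite piecewise_le by lra.
    + now rewrite piecewise_le, Ef by lra.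
  - exact (continuous_ext_loc _ _ _ (piecewise_locally_gt a f1 f2 x Hx) (C2 x)).
Qed.

Lemma Derive_of_is_derive (f df : R -> R) : (forall x, is_derive f x (df x)) -> Derive f = df.
Proof. intros D. apply functional_extensionality. intros x. apply is_derive_unique, D. Qed.

Lemma is_derive_increasing (f df : R -> R) x y :
  (forall z, is_derive f z (df z)) -> x < y -> (forall z, x < z < y -> 0 < df z) ->
  f x < f y.
Proof.
  intros D Hxy Hpos. destruct (MVT_cor2 f df x y Hxy) as [c [E Hc]].
  - intros c _. apply is_derive_Reals, D.
  - specialize (Hpos c Hc). nra.
Qed.

Lemma is_derive_decreasing (f df : R -> R) x y :
  (forall z, is_derive f z (df z)) -> x < y -> (forall z, x < z < y -> df z < 0) ->
  f y < f x.
Proof.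
  intros D Hxy Hneg. destruct (MVT_cor2 f df x y Hxy) as [c [E Hc]].
  - intros c _. apply is_derive_Reals, D.
  - specialize (Hneg c Hc). nra.
Qed.

Lemma pos_root_exists_unique (h dh : R -> R) Y :
  (forall y, is_derive h y (dh y)) ->
  (forall s t, 0 < s -> s <= t -> dh s < 0 -> dh t < 0) ->
  0 < h 0 -> 0 < Y -> h Y < 0 -> exists! y, 0 < y /\ h y = 0.
Proof.
  intros D Hneg H0 HY HhY.
  assert (no_two : forall a c, 0 < a -> a < c -> h a = 0 -> h c = 0 -> False).
  { intros a c Ha Hac Ha0 Hc0.
    destruct (MVT_cor2 h dh 0 a Ha) as [s [Es Hs]]; [intros; apply is_derive_Reals, D|].
    destruct (MVT_cor2 h dh a c Hac) as [t [Et Ht]]; [intros; apply is_derive_Reals, D|].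
    assert (dh s < 0) by nra.
    assert (dh t = 0) by (apply Rmult_eq_reg_r with (c - a); lra).
    assert (dh t < 0) by (apply (Hneg s t); lra).
    lra. }
  assert (Hcont : continuity (fun y => - h y)).
  { intros y. apply continuity_pt_opp, continuity_pt_filterlim.
    apply (ex_derive_continuous h). eexists; apply D. }
  destruct (IVT _ 0 Y Hcont HY ltac:(lra) ltac:(lra)) as [z [Hz Ehz]].
  exists z. assert (Hz0 : 0 < z) by (destruct (Req_dec z 0) as [->|]; lra).
  split; [split; [exact Hz0 | lra]|].
  intros y [Hy Ehy]. destruct (Rtotal_order z y) as [Hlt | [Heq | Hgt]]; auto.
  - exfalso. apply (no_two z y); lra.
  - exfalso. apply (no_two y z); lra.
Qed.

Lemma exp_le_mono x y : x <= y -> exp x <= exp y.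
Proof.
  intros H. destruct (Req_dec x y) as [-> | Hne]; [lra|].
  left. apply exp_increasing. lra.
Qed.

Definition exp_profile (K1 p1 K2 p2 C c x : R) : R :=
  K1 * exp (p1 * (x - c)) + K2 * exp (p2 * (x - c)) + C.

Lemma is_derive_exp_profile K1 p1 K2 p2 C c x :
  is_derive (exp_profile K1 p1 K2 p2 C c) x (exp_profile (K1 * p1) p1 (K2 * p2) p2 0 c x).
Proof. unfold exp_profile. auto_derive; [exact I|]. unfold Rminus. ring. Qed.

Lemma continuous_exp_profile K1 p1 K2 p2 C c x :
  continuous (exp_profile K1 p1 K2 p2 C c) x.
Proof.
  apply (ex_derive_continuous (exp_profile K1 p1 K2 p2 C c)).
  eexists. apply is_derive_exp_profile.
Qed.

Lemma exp_profile_at K1 p1 K2 p2 C c : exp_profile K1 p1 K2 p2 C c c = K1 + K2 + C.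
Proof. unfold exp_profile. rewrite Rminus_diag, !Rmult_0_r, exp_0. ring. Qed.

Lemma exp_profile_reflect K1 p1 K2 p2 C c x :
  exp_profile K1 p1 K2 p2 C c x = exp_profile K1 (- p1) K2 (- p2) C (- c) (- x).
Proof.
  unfold exp_profile.
  replace (- p1 * (- x - - c)) with (p1 * (x - c)) by ring.
  replace (- p2 * (- x - - c)) with (p2 * (x - c)) by ring.
  reflexivity.
Qed.

Lemma exp_profile_ode s a r K1 p1 K2 p2 q c x : r <> 0 ->
  / 2 * s * p1 ^ 2 + a * p1 - r = 0 -> / 2 * s * p2 ^ 2 + a * p2 - r = 0 ->
  / 2 * s * exp_profile (K1 * p1 * p1) p1 (K2 * p2 * p2) p2 0 c x
  + a * exp_profile (K1 * p1) p1 (K2 * p2) p2 0 c x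
  - r * exp_profile K1 p1 K2 p2 (q / r) c x + q = 0.
Proof.
  intros Hr E1 E2. unfold exp_profile.
  set (e1 := exp (p1 * (x - c))). set (e2 := exp (p2 * (x - c))).
  transitivity (K1 * e1 * (/ 2 * s * p1 ^ 2 + a * p1 - r)
                + K2 * e2 * (/ 2 * s * p2 ^ 2 + a * p2 - r)).
  - field. exact Hr.
  - rewrite E1, E2. ring.
Qed.

Lemma exp_profile_neg_propagates K1 p1 K2 p2 c s t :
  p1 <= 0 -> 0 <= p2 -> K2 < 0 -> s <= t ->
  exp_profile K1 p1 K2 p2 0 c s < 0 -> exp_profile K1 p1 K2 p2 0 c t < 0.
Proof.
  unfold exp_profile. intros Hp1 Hp2 HK2 Hst Hs.
  assert (E1 : exp (p1 * (t - c)) <= exp (p1 * (s - c))) by (apply exp_le_mono; nra).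
  assert (E2 : exp (p2 * (s - c)) <= exp (p2 * (t - c))) by (apply exp_le_mono; nra).
  pose proof (exp_pos (p1 * (t - c))). pose proof (exp_pos (p2 * (s - c))).
  destruct (Rle_or_lt K1 0); nra.
Qed.

Lemma quadratic_pos_root s a r rho : 0 < s -> 0 < r ->
  rho = (sqrt (a ^ 2 + 2 * s * r) + a) / s ->
  0 < rho /\ / 2 * s * rho ^ 2 - a * rho - r = 0.
Proof.
  intros Hs Hr ->. set (S := sqrt (a ^ 2 + 2 * s * r)).
  assert (HS : S * S = a ^ 2 + 2 * s * r) by (apply sqrt_sqrt; nra).
  assert (S0 : 0 <= S) by apply sqrt_pos.
  assert (Sa : - a < S) by nra.
  split.
  - apply Rdiv_lt_0_compat; lra.
  - replace (/ 2 * s * ((S + a) / s) ^ 2 - a * ((S + a) / s) - r)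
      with ((S * S - a ^ 2 - 2 * s * r) / (2 * s)) by (field; lra).
    rewrite HS. field. lra.
Qed.

Section Roots.
Variables mu sigma r cbar b : R.
Hypotheses (Hsigma : 0 < sigma) (Hr : 0 < r).

Lemma gam_spec : 0 < gam mu sigma r cbar /\
  / 2 * sigma ^ 2 * gam mu sigma r cbar ^ 2 - (mu - cbar) * gam mu sigma r cbar - r = 0.
Proof. apply quadratic_pos_root; [nra | lra | reflexivity]. Qed.

Lemma lam1_spec : 0 < lam1 mu sigma r cbar b /\
  / 2 * sigma ^ 2 * lam1 mu sigma r cbar b ^ 2 + (mu - b * cbar) * lam1 mu sigma r cbar b - r = 0.
Proof.
  destruct (quadratic_pos_root (sigma ^ 2) (- (mu - b * cbar)) r (lam1 mu sigma r cbar b))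
    as [Hpos Hroot]; [nra | lra | |split; [exact Hpos | lra]].
  unfold lam1. replace ((- (mu - b * cbar)) ^ 2) with ((mu - b * cbar) ^ 2) by ring.
  reflexivity.
Qed.

Lemma lam2_spec : 0 < lam2 mu sigma r cbar b /\
  / 2 * sigma ^ 2 * lam2 mu sigma r cbar b ^ 2 - (mu - b * cbar) * lam2 mu sigma r cbar b - r = 0.
Proof. apply quadratic_pos_root; [nra | lra | reflexivity]. Qed.

Lemma gam_le_iff : 0 < cbar ->
  (cbar * gam mu sigma r cbar <= r <-> 2 * mu * cbar <= sigma ^ 2 * r).
Proof.
  intros Hc. destruct gam_spec as [Hg Hroot]. set (g := gam mu sigma r cbar) in *.
  assert (Hslope : 0 < / 2 * sigma ^ 2 * g - (mu - cbar)).
  { apply Rmult_lt_reg_l with g; [exact Hg|]. nra. }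
  assert (Hfac : r * (/ 2 * sigma ^ 2 * r - mu * cbar)
    = (r - cbar * g) * (/ 2 * sigma ^ 2 * (r + cbar * g) - (mu - cbar) * cbar)) by nra.
  assert (Hpos : 0 < / 2 * sigma ^ 2 * (r + cbar * g) - (mu - cbar) * cbar) by nra.
  split; intros H; nra.
Qed.

End Roots.

Lemma hjb_upper mu sigma r cbar b (v : R -> R) x : Derive v x <= 1 ->
  - opL mu sigma r v x - cbar * opT b v x =
  - (/ 2 * sigma ^ 2 * Derive (Derive v) x + (mu - cbar) * Derive v x - r * v x + cbar).
Proof. intros H. unfold opL, opT. rewrite Rmax_right by lra. ring. Qed.

Lemma hjb_lower mu sigma r cbar b (v : R -> R) x : 1 <= Derive v x ->
  - opL mu sigma r v x - cbar * opT b v x =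
  - (/ 2 * sigma ^ 2 * Derive (Derive v) x + (mu - b * cbar) * Derive v x - r * v x
     + b * cbar).
Proof. intros H. unfold opL, opT. rewrite Rmax_left by lra. ring. Qed.

Lemma good_g_intro mu sigma r cbar b (g g1 g2 : R -> R) :
  (forall x, is_derive g x (g1 x)) -> (forall x, is_derive g1 x (g2 x)) ->
  (forall x, continuous g2 x) ->
  (forall x, 0 <= x -> - opL mu sigma r g x - cbar * opT b g x = 0) ->
  g 0 = 0 -> (forall x, 0 <= x -> g x <= cbar / r) ->
  (forall x, 0 <= x -> 0 < g1 x) -> (forall x, 0 < x -> g2 x < 0) ->
  good_g mu sigma r cbar b g.
Proof.
  intros D1 D2 C2 Hhjb Hg0 Hub Hpos Hneg.
  assert (Hdecr : forall x y, 0 <= x -> x < y -> g1 y < g1 x).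
  { intros x y Hx Hxy. apply (is_derive_decreasing g1 g2); auto.
    intros z Hz. apply Hneg. lra. }
  unfold good_g, C2_nonneg.
  rewrite (Derive_of_is_derive g g1 D1), (Derive_of_is_derive g1 g2 D2).
  split; [intros x _; split; [|split]; [eexists; apply D1 | eexists; apply D2 | apply C2]|].
  split; [exact Hhjb|]. split; [exact Hg0|].
  split; [|split; [|exact Hdecr]].
  - intros x Hx. split; [|auto].
    destruct (Req_dec x 0) as [-> | Hx0]; [lra|].
    rewrite <- Hg0. left.
    apply (is_derive_increasing g g1); [exact D1 | lra | intros z Hz; apply Hpos; lra].
  - intros x Hx. split; [left; auto|].
    destruct (Req_dec x 0) as [-> | Hx0]; [lra|]. left. apply Hdecr; lra.
Qed.

Lemma g_case1_good mu sigma r cbar b :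
  0 < sigma -> 0 < r -> 0 < cbar -> cbar * gam mu sigma r cbar <= r ->
  good_g mu sigma r cbar b (g_case1 mu sigma r cbar).
Proof.
  intros Hsigma Hr Hc Hsmall. destruct (gam_spec mu sigma r cbar Hsigma Hr) as [Hga Hroot].
  set (ga := gam mu sigma r cbar) in *.
  set (g := exp_profile (- (cbar / r)) (- ga) 0 (- ga) (cbar / r) 0).
  set (g1 := exp_profile (- (cbar / r) * - ga) (- ga) (0 * - ga) (- ga) 0 0).
  set (g2 := exp_profile (- (cbar / r) * - ga * - ga) (- ga) (0 * - ga * - ga) (- ga) 0 0).
  assert (Eg : g_case1 mu sigma r cbar = g).
  { apply functional_extensionality. intros x. unfold g_case1, g, exp_profile. fold ga.
    rewrite Rminus_0_r. ring. }
  assert (Eg1 : forall x, g1 x = cbar / r * ga * exp (- ga * x)).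
  { intros x. unfold g1, exp_profile. rewrite Rminus_0_r. ring. }
  assert (Eg2 : forall x, g2 x = - (cbar / r * ga ^ 2 * exp (- ga * x))).
  { intros x. unfold g2, exp_profile. rewrite Rminus_0_r. ring. }
  assert (Hcr : 0 < cbar / r) by (apply Rdiv_lt_0_compat; lra).
  assert (D1 : forall x, is_derive g x (g1 x)) by (intros; apply is_derive_exp_profile).
  assert (D2 : forall x, is_derive g1 x (g2 x)) by (intros; apply is_derive_exp_profile).
  assert (Hslope : forall x, 0 <= x -> g1 x <= 1).
  { intros x Hx. rewrite Eg1.
    assert (exp (- ga * x) <= 1) by (rewrite <- exp_0; apply exp_le_mono; nra).
    apply Rmult_le_reg_l with r; [lra|].
    replace (r * (cbar / r * ga * exp (- ga * x))) with (cbar * ga * exp (- ga * x))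
      by (field; lra).
    pose proof (exp_pos (- ga * x)). assert (0 < cbar * ga) by nra. nra. }
  rewrite Eg. apply good_g_intro with g1 g2; auto.
  - intros x. apply continuous_exp_profile.
  - intros x Hx. rewrite hjb_upper by (rewrite (Derive_of_is_derive g g1 D1); auto).
    rewrite (Derive_of_is_derive g g1 D1), (Derive_of_is_derive g1 g2 D2).
    unfold g, g1, g2.
    rewrite (exp_profile_ode (sigma ^ 2) (mu - cbar) r); [ring | lra | nra | nra].
  - unfold g. rewrite exp_profile_at. ring.
  - intros x Hx. unfold g, exp_profile.
    pose proof (exp_pos (- ga * (x - 0))). nra.
  - intros x _. rewrite Eg1. apply Rmult_lt_0_compat; [nra | apply exp_pos].
  - intros x _. rewrite Eg2. apply Ropp_lt_gt_0_contravar.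
    apply Rmult_lt_0_compat; [apply Rmult_lt_0_compat; [lra | apply pow_lt; lra] | apply exp_pos].
Qed.

Section SecondCase.
Variables mu sigma r cbar b : R.
Hypotheses (Hsigma : 0 < sigma) (Hr : 0 < r) (Hc : 0 < cbar) (Hb0 : 0 <= b).
Hypothesis Hlarge : r < cbar * gam mu sigma r cbar.

Local Notation ga := (gam mu sigma r cbar).
Local Notation l1 := (lam1 mu sigma r cbar b).
Local Notation l2 := (lam2 mu sigma r cbar b).
Local Notation k1 := (kk1 mu sigma r cbar b).
Local Notation k2 := (kk2 mu sigma r cbar b).

Lemma kk_diff : k1 - k2 = (1 - b) * cbar / r - / ga.
Proof.
  destruct (gam_spec mu sigma r cbar Hsigma Hr).
  destruct (lam1_spec mu sigma r cbar b Hsigma Hr), (lam2_spec mu sigma r cbar b Hsigma Hr).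
  unfold kk1, kk2. field. repeat split; lra.
Qed.

Lemma kk_slope : k1 * l1 + k2 * l2 = 1.
Proof.
  destruct (gam_spec mu sigma r cbar Hsigma Hr).
  destruct (lam1_spec mu sigma r cbar b Hsigma Hr), (lam2_spec mu sigma r cbar b Hsigma Hr).
  unfold kk1, kk2. field. repeat split; lra.
Qed.

Lemma kk2_pos : 0 < k2.
Proof.
  destruct (gam_spec mu sigma r cbar Hsigma Hr) as [Hg Eg].
  destruct (lam1_spec mu sigma r cbar b Hsigma Hr) as [H1 E1].
  destruct (lam2_spec mu sigma r cbar b Hsigma Hr) as [H2 _].
  set (A := (1 - b) * cbar / r - / ga).
  assert (Hrg : r / ga = / 2 * sigma ^ 2 * ga - (mu - cbar))
    by (apply Rmult_eq_reg_l with ga; [field_simplify; lra | lra]).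
  assert (Hid : 2 * r * (1 - l1 * A) = sigma ^ 2 * l1 * (l1 + ga)).
  { transitivity (2 * r - 2 * l1 * (1 - b) * cbar + 2 * l1 * (r / ga));
      [unfold A; field; lra | rewrite Hrg; lra]. }
  assert (0 < sigma ^ 2 * l1 * (l1 + ga))
    by (apply Rmult_lt_0_compat; [apply Rmult_lt_0_compat; [nra | lra] | lra]).
  assert (Hnum : 0 < 1 - l1 * A) by nra.
  unfold kk2. fold A. apply Rmult_lt_0_compat; [apply Rinv_0_lt_compat; lra | exact Hnum].
Qed.

Lemma y0_exists_unique : exists! y0, 0 < y0 /\ y0_eq mu sigma r cbar b y0.
Proof.
  destruct (gam_spec mu sigma r cbar Hsigma Hr) as [Hg _].
  destruct (lam1_spec mu sigma r cbar b Hsigma Hr) as [H1 _].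
  destruct (lam2_spec mu sigma r cbar b Hsigma Hr) as [H2 _].
  pose proof kk2_pos as Hk2.
  set (h := fun y => k1 * exp (- l1 * y) - k2 * exp (l2 * y) + b * cbar / r).
  set (dh := exp_profile (- (k1 * l1)) (- l1) (- (k2 * l2)) l2 0 0).
  assert (Dh : forall y, is_derive h y (dh y)).
  { intros y. unfold h, dh, exp_profile. rewrite Rminus_0_r. auto_derive; [exact I | ring]. }
  assert (Hbc : 0 <= b * cbar / r)
    by (apply Rmult_le_pos; [nra | left; apply Rinv_0_lt_compat; lra]).
  (* At Y the lower bound k2 (1 + l2 Y) of k2 e^{l2 Y} beats |k1| + b cbar / r. *)
  set (Y := (Rabs k1 + b * cbar / r + 1) / (k2 * l2)).
  assert (HY : 0 < Y).
  { apply Rdiv_lt_0_compat; [pose proof (Rabs_pos k1); lra | nra]. }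
  apply (pos_root_exists_unique h dh Y Dh); [| | exact HY |].
  - intros s t _ Hst. apply exp_profile_neg_propagates; [lra | lra | nra | exact Hst].
  - unfold h. rewrite !Rmult_0_r, exp_0.
    assert (E : k1 * 1 - k2 * 1 + b * cbar / r = (cbar * ga - r) / (r * ga)).
    { transitivity (cbar / r - / ga); [pose proof kk_diff; lra | field; lra]. }
    rewrite E. apply Rdiv_lt_0_compat; nra.
  - unfold h.
    assert (E1 : k1 * exp (- l1 * Y) <= Rabs k1).
    { assert (exp (- l1 * Y) <= 1) by (rewrite <- exp_0; apply exp_le_mono; nra).
      pose proof (exp_pos (- l1 * Y)). pose proof (Rle_abs k1). pose proof (Rabs_pos k1). nra. }
    assert (E2 : k2 * (1 + l2 * Y) <= k2 * exp (l2 * Y))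
      by (apply Rmult_le_compat_l; [lra | apply exp_ineq1_le]).
    assert (k2 * l2 * Y = Rabs k1 + b * cbar / r + 1) by (unfold Y; field; nra).
    nra.
Qed.

Variable y0 : R.
Hypotheses (Hy0 : 0 < y0) (Hroot : y0_eq mu sigma r cbar b y0).

Local Notation inner := (exp_profile k1 l1 (- k2) (- l2) (b * cbar / r) y0).
Local Notation inner1 := (exp_profile (k1 * l1) l1 (- k2 * - l2) (- l2) 0 y0).
Local Notation inner2 := (exp_profile (k1 * l1 * l1) l1 (- k2 * - l2 * - l2) (- l2) 0 y0).
Local Notation outer := (exp_profile (- / ga) (- ga) 0 (- ga) (cbar / r) y0).
Local Notation outer1 := (exp_profile (- / ga * - ga) (- ga) (0 * - ga) (- ga) 0 y0).
Local Notation outer2 :=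
  (exp_profile (- / ga * - ga * - ga) (- ga) (0 * - ga * - ga) (- ga) 0 y0).

Lemma g_case2_piecewise : g_case2 mu sigma r cbar b y0 = piecewise y0 inner outer.
Proof.
  apply functional_extensionality. intros x. unfold g_case2, piecewise, exp_profile.
  destruct (Rle_dec x y0); ring.
Qed.

Lemma inner_ode x :
  / 2 * sigma ^ 2 * inner2 x + (mu - b * cbar) * inner1 x - r * inner x + b * cbar = 0.
Proof.
  destruct (lam1_spec mu sigma r cbar b Hsigma Hr) as [_ E1].
  destruct (lam2_spec mu sigma r cbar b Hsigma Hr) as [_ E2].
  apply exp_profile_ode; lra.
Qed.

Lemma outer_ode x :
  / 2 * sigma ^ 2 * outer2 x + (mu - cbar) * outer1 x - r * outer x + cbar = 0.
Proof.
  destruct (gam_spec mu sigma r cbar Hsigma Hr) as [_ Eg].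
  apply exp_profile_ode; lra.
Qed.

Lemma profiles_match_value : inner y0 = outer y0.
Proof.
  rewrite !exp_profile_at. pose proof kk_diff. unfold Rdiv in *. lra.
Qed.

Lemma inner1_at : inner1 y0 = 1.
Proof. rewrite exp_profile_at. pose proof kk_slope. lra. Qed.

Lemma outer1_at : outer1 y0 = 1.
Proof.
  destruct (gam_spec mu sigma r cbar Hsigma Hr) as [Hg _].
  rewrite exp_profile_at. field. lra.
Qed.

(* Where g' = 1 both ODEs reduce to sigma^2 / 2 g'' = r g - mu. *)
Lemma profiles_match_curvature : inner2 y0 = outer2 y0.
Proof.
  pose proof (inner_ode y0) as Ei. pose proof (outer_ode y0) as Eo.
  rewrite inner1_at, profiles_match_value in Ei. rewrite outer1_at in Eo.
  apply Rmult_eq_reg_l with (/ 2 * sigma ^ 2); [lra | nra].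
Qed.

Lemma outer2_at : outer2 y0 = - ga.
Proof.
  destruct (gam_spec mu sigma r cbar Hsigma Hr) as [Hg _].
  rewrite exp_profile_at. field. lra.
Qed.

Lemma inner2_neg x : x <= y0 -> inner2 x < 0.
Proof.
  intros Hx.
  destruct (gam_spec mu sigma r cbar Hsigma Hr) as [Hg _].
  destruct (lam1_spec mu sigma r cbar b Hsigma Hr) as [H1 _].
  destruct (lam2_spec mu sigma r cbar b Hsigma Hr) as [H2 _].
  pose proof kk2_pos.
  rewrite exp_profile_reflect.
  apply exp_profile_neg_propagates with (- y0); [lra | lra | | lra |].
  - assert (0 < k2 * l2 * l2) by (apply Rmult_lt_0_compat; [nra | lra]). nra.
  - rewrite <- exp_profile_reflect, profiles_match_curvature, outer2_at. lra.
Qed.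

Lemma inner1_ge_1 x : x <= y0 -> 1 <= inner1 x.
Proof.
  intros Hx. rewrite <- inner1_at. destruct (Req_dec x y0) as [-> | Hne]; [lra|].
  left. apply (is_derive_decreasing inner1 inner2); [intros; apply is_derive_exp_profile | lra |].
  intros z Hz. apply inner2_neg. lra.
Qed.

Lemma outer1_eq x : outer1 x = exp (- ga * (x - y0)).
Proof.
  destruct (gam_spec mu sigma r cbar Hsigma Hr) as [Hg _].
  unfold exp_profile. field. lra.
Qed.

Lemma outer2_neg x : outer2 x < 0.
Proof.
  destruct (gam_spec mu sigma r cbar Hsigma Hr) as [Hg _].
  replace (outer2 x) with (- (ga * exp (- ga * (x - y0)))) by (unfold exp_profile; field; lra).
  pose proof (exp_pos (- ga * (x - y0))). nra.
Qed.

Lemma inner_at_0 : inner 0 = 0.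
Proof.
  unfold exp_profile.
  replace (l1 * (0 - y0)) with (- l1 * y0) by ring.
  replace (- l2 * (0 - y0)) with (l2 * y0) by ring.
  unfold y0_eq in Hroot. lra.
Qed.

Lemma outer_lt_cap x : outer x < cbar / r.
Proof.
  destruct (gam_spec mu sigma r cbar Hsigma Hr) as [Hg _].
  unfold exp_profile.
  assert (0 < / ga * exp (- ga * (x - y0)))
    by (apply Rmult_lt_0_compat; [apply Rinv_0_lt_compat; lra | apply exp_pos]).
  lra.
Qed.

Lemma g_case2_good :
  good_g mu sigma r cbar b (g_case2 mu sigma r cbar b y0) /\
  Derive (g_case2 mu sigma r cbar b y0) y0 = 1.
Proof.
  set (G := piecewise y0 inner outer).
  set (G1 := piecewise y0 inner1 outer1).
  set (G2 := piecewise y0 inner2 outer2).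
  assert (D1 : forall x, is_derive G x (G1 x)).
  { apply is_derive_piecewise; [intros; apply is_derive_exp_profile ..| |].
    - exact profiles_match_value.
    - now rewrite inner1_at, outer1_at. }
  assert (D2 : forall x, is_derive G1 x (G2 x)).
  { apply is_derive_piecewise; [intros; apply is_derive_exp_profile ..| |].
    - now rewrite inner1_at, outer1_at.
    - exact profiles_match_curvature. }
  assert (HG1_outer : forall x, y0 < x -> 0 < G1 x <= 1).
  { intros x Hx. unfold G1. rewrite piecewise_gt, outer1_eq by lra.
    split; [apply exp_pos | rewrite <- exp_0; apply exp_le_mono; nra]. }
  assert (HG1 : forall x, 0 < G1 x).
  { intros x. destruct (Rle_or_lt x y0).
    - unfold G1. rewrite piecewise_le by lra. pose proof (inner1_ge_1 x). lra.
    - now apply HG1_outer. }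
  assert (DG : Derive G = G1) by exact (Derive_of_is_derive G G1 D1).
  assert (DG1 : Derive G1 = G2) by exact (Derive_of_is_derive G1 G2 D2).
  rewrite g_case2_piecewise. fold G. split.
  2:{ rewrite DG. unfold G1. rewrite piecewise_le by lra. exact inner1_at. }
  apply good_g_intro with G1 G2; auto.
  - apply continuous_piecewise; [intros; apply continuous_exp_profile ..|].
    exact profiles_match_curvature.
  - intros x Hx. destruct (Rle_or_lt x y0) as [Hle | Hgt].
    + rewrite hjb_lower by (rewrite DG; unfold G1; rewrite piecewise_le by lra;
                           now apply inner1_ge_1).
      rewrite DG, DG1. unfold G, G1, G2. rewrite !piecewise_le by lra.
      rewrite inner_ode. ring.
    + rewrite hjb_upper by (rewrite DG; apply HG1_outer; lra).
      rewrite DG, DG1. unfold G, G1, G2. rewrite !piecewise_gt by lra.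
      rewrite outer_ode. ring.
  - unfold G. rewrite piecewise_le by lra. exact inner_at_0.
  - intros x Hx. destruct (Rle_or_lt x y0).
    + apply Rle_trans with (G y0).
      * destruct (Req_dec x y0) as [-> | Hne]; [lra|].
        left. apply (is_derive_increasing G G1); auto. lra.
      * unfold G. rewrite piecewise_le by lra. rewrite profiles_match_value.
        left. apply outer_lt_cap.
    + unfold G. rewrite piecewise_gt by lra. left. apply outer_lt_cap.
  - intros x _. unfold G2. destruct (Rle_or_lt x y0).
    + rewrite piecewise_le by lra. now apply inner2_neg.
    + rewrite piecewise_gt by lra. apply outer2_neg.
Qed.

End SecondCase.

Theorem lemma3p3 (mu sigma r cbar b : R)
  (Hsigma : 0 < sigma) (Hr : 0 < r) (Hc0 : 0 < cbar) (Hcmu : cbar <= mu)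
  (Hb0 : 0 <= b) (Hb1 : b <= 1) :
  (2 * mu * cbar <= sigma^2 * r ->
     good_g mu sigma r cbar b (g_case1 mu sigma r cbar)) /\
  (sigma^2 * r < 2 * mu * cbar ->
     (exists! y0, 0 < y0 /\ y0_eq mu sigma r cbar b y0) /\
     (forall y0, 0 < y0 -> y0_eq mu sigma r cbar b y0 ->
        good_g mu sigma r cbar b (g_case2 mu sigma r cbar b y0) /\
        Derive (g_case2 mu sigma r cbar b y0) y0 = 1)).
Proof.
  split.
  - intros Hsmall. apply g_case1_good; auto.
    now apply gam_le_iff.
  - intros Hbig.
    assert (Hlarge : r < cbar * gam mu sigma r cbar).
    { apply Rnot_le_lt. rewrite (gam_le_iff mu sigma r cbar Hsigma Hr Hc0). lra. }
    split.
    + now apply y0_exists_unique.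
    + intros y0 Hy0 Hroot. now apply g_case2_good.
Qed.
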